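(* Let $T$ be a complete theory with monster model $\mathcal{U}$, $A\subseteq\mathcal{U}$ small, and $\nu\in\mathfrak{M}_y(\mathcal{U})$ smooth over $A$. Then for every $\mu\in\mathfrak{M}_x(\mathcal{U})$, $\mu\geq_{\mathbb{E},A}\nu$.
   Context: For $C\subseteq\mathcal{U}$, $\mathcal{L}_x(C)$ is the Boolean algebra of formulas in $x$ with parameters from $C$ modulo $T$, embedded in $\mathcal{L}_{xy}(C)$ via $\varphi(x)\mapsto\varphi(x)\wedge y=y$; $\mathfrak{M}_x(C)$ is the set of finitely additive probability measures on $\mathcal{L}_x(C)$. For $\omega\in\mathfrak{M}_{xy}(C)$, $\pi_x(\omega)(\varphi(x))=\omega(\varphi(x)\wedge y=y)$ (similarly $\pi_y$); $\omega|_D$ is restriction. $\mu\geq_{\mathbb{E},A}\nu$ means there is $\lambda\in\mathfrak{M}_{xy}(A)$ with $\pi_x(\lambda)=\mu|_A$ such that every $\omega\in\mathfrak{M}_{xy}(\mathcal{U})$ with $\omega|_A=\lambda$ and $\pi_x(\omega)=\mu$ satisfies $\pi_y(\omega)=\nu$. A global measure $\nu$ is smooth over $A$ if every $\nu'\in\mathfrak{M}_y(\mathcal{U})$ with $\nu'|_A=\nu|_A$ equals $\nu$. *)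

From Stdlib Require Import Reals List.
From Stdlib Require Fin.
Import ListNotations.
Open Scope R_scope.

Record signature := {
  Fsym : Type; Rsym : Type;
  farity : Fsym -> nat; rarity : Rsym -> nat }.

Record structure (L : signature) := {
  carrier :> Type;
  funs : forall f : Fsym L, (Fin.t (farity L f) -> carrier) -> carrier;
  rels : forall r : Rsym L, (Fin.t (rarity L r) -> carrier) -> Prop }.
Arguments funs {L} _ _ _.
Arguments rels {L} _ _ _.

(* Terms and formulas with variables indexed by nat and parameters
   (constants naming elements) from a type P. *)
Inductive term (L : signature) (P : Type) : Type :=
| tvar : nat -> term L P
| tpar : P -> term L P
| tapp : forall f : Fsym L, (Fin.t (farity L f) -> term L P) -> term L P.
Arguments tvar {L P}. Arguments tpar {L P}. Arguments tapp {L P}.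

Inductive formula (L : signature) (P : Type) : Type :=
| fEq  : term L P -> term L P -> formula L P
| fRel : forall r : Rsym L, (Fin.t (rarity L r) -> term L P) -> formula L P
| fNeg : formula L P -> formula L P
| fAnd : formula L P -> formula L P -> formula L P
| fEx  : nat -> formula L P -> formula L P.
Arguments fEq {L P}. Arguments fRel {L P}. Arguments fNeg {L P}.
Arguments fAnd {L P}. Arguments fEx {L P}.

Definition fOr {L P} (a b : formula L P) : formula L P :=
  fNeg (fAnd (fNeg a) (fNeg b)).
Definition fTop {L P} : formula L P := fEx 0 (fEq (tvar 0) (tvar 0)).

Definition fml {L} (M : structure L) := formula L (carrier L M).

Definition upd {U : Type} (s : nat -> U) (i : nat) (a : U) : nat -> U :=
  fun j => if Nat.eqb j i then a else s j.

Fixpoint eval {L} (M : structure L) (s : nat -> M) (t : term L M) : M :=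
  match t with
  | tvar i => s i
  | tpar a => a
  | tapp f args => funs M f (fun k => eval M s (args k))
  end.

Fixpoint sat {L} (M : structure L) (s : nat -> M) (p : fml M) : Prop :=
  match p with
  | fEq t1 t2 => eval M s t1 = eval M s t2
  | fRel r args => rels M r (fun k => eval M s (args k))
  | fNeg q => ~ sat M s q
  | fAnd q1 q2 => sat M s q1 /\ sat M s q2
  | fEx i q => exists a, sat M (upd s i a) q
  end.

Fixpoint tfree {L P} (i : nat) (t : term L P) : Prop :=
  match t with
  | tvar j => j = i
  | tpar _ => False
  | tapp f args => exists k, tfree i (args k)
  end.

Fixpoint ffree {L P} (i : nat) (p : formula L P) : Prop :=
  match p with
  | fEq t1 t2 => tfree i t1 \/ tfree i t2
  | fRel r args => exists k, tfree i (args k)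
  | fNeg q => ffree i q
  | fAnd q1 q2 => ffree i q1 \/ ffree i q2
  | fEx j q => j <> i /\ ffree i q
  end.

Fixpoint tparams_in {L P} (C : P -> Prop) (t : term L P) : Prop :=
  match t with
  | tvar _ => True
  | tpar a => C a
  | tapp f args => forall k, tparams_in C (args k)
  end.

Fixpoint fparams_in {L P} (C : P -> Prop) (p : formula L P) : Prop :=
  match p with
  | fEq t1 t2 => tparams_in C t1 /\ tparams_in C t2
  | fRel r args => forall k, tparams_in C (args k)
  | fNeg q => fparams_in C q
  | fAnd q1 q2 => fparams_in C q1 /\ fparams_in C q2
  | fEx _ q => fparams_in C q
  end.

(** * The monster model.
   T is the complete theory Th(M); "small" means of size < kappa, where kappa
   is the cardinality of the type K. *)
Definition card_lt (X Y : Type) : Prop :=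
  (exists f : X -> Y, forall a b, f a = f b -> a = b) /\
  ~ (exists g : Y -> X, forall a b, g a = g b -> a = b).

Definition small {L} (M : structure L) (K : Type) (B : M -> Prop) : Prop :=
  card_lt {a : M | B a} K.

Definition in_L {L} (M : structure L) (x : list nat) (C : M -> Prop)
  (p : fml M) : Prop :=
  (forall i, ffree i p -> In i x) /\ fparams_in C p.

Definition saturated {L} (M : structure L) (K : Type) : Prop :=
  forall B : M -> Prop, small M K B ->
  forall p : fml M -> Prop,
    (forall q, p q -> in_L M [0%nat] B q) ->
    (forall l : list (fml M), (forall q, In q l -> p q) ->
        exists s, forall q, In q l -> sat M s q) ->
    exists s, forall q, p q -> sat M s q.

Definition automorphism {L} (M : structure L) (sg : M -> M) : Prop :=
  (exists tau : M -> M, (forall a, tau (sg a) = a) /\ (forall a, sg (tau a) = a)) /\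
  (forall f args, sg (funs M f args) = funs M f (fun k => sg (args k))) /\
  (forall r args, rels M r args <-> rels M r (fun k => sg (args k))).

Definition elementary_on {L} (M : structure L) (B : M -> Prop) (f : M -> M) : Prop :=
  forall (p : fml M) (s : nat -> M),
    fparams_in (fun _ => False) p -> (forall i, B (s i)) ->
    (sat M s p <-> sat M (fun i => f (s i)) p).

Definition strongly_homogeneous {L} (M : structure L) (K : Type) : Prop :=
  forall (B : M -> Prop) (f : M -> M), small M K B -> elementary_on M B f ->
  exists sg, automorphism M sg /\ forall a, B a -> sg a = f a.

(* M is a monster model (kappa-saturated, strongly kappa-homogeneous,
   kappa > |T| = |L| + aleph_0) of its complete theory T = Th(M). *)
Definition monster {L} (M : structure L) (K : Type) : Prop :=
  inhabited (carrier L M) /\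
  card_lt nat K /\ card_lt (Fsym L) K /\ card_lt (Rsym L) K /\
  saturated M K /\ strongly_homogeneous M K.

(* mod-T equivalence of formulas with parameters = equivalence in M *)
Definition equivM {L} (M : structure L) (p q : fml M) : Prop :=
  forall s, sat M s p <-> sat M s q.

(* m : fml M -> R is (represents) an element of M_x(C): a finitely additive
   probability measure on L_x(C) (only values on L_x(C) matter). *)
Definition keisler {L} (M : structure L) (x : list nat) (C : M -> Prop)
  (m : fml M -> R) : Prop :=
  (forall p q, in_L M x C p -> in_L M x C q -> equivM M p q -> m p = m q) /\
  (forall p, in_L M x C p -> 0 <= m p) /\
  (forall p, in_L M x C p -> (forall s, sat M s p) -> m p = 1) /\
  (forall p q, in_L M x C p -> in_L M x C q ->
     (forall s, ~ (sat M s p /\ sat M s q)) -> m (fOr p q) = m p + m q).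

Definition meas_eq {L} (M : structure L) (x : list nat) (C : M -> Prop)
  (m1 m2 : fml M -> R) : Prop :=
  forall p, in_L M x C p -> m1 p = m2 p.

Definition fullset {U : Type} : U -> Prop := fun _ => True.

Definition vars_eq {L P} (y : list nat) : formula L P :=
  fold_right (fun j acc => fAnd (fEq (tvar j) (tvar j)) acc) fTop y.

Definition pi_x {L} {M : structure L} (y : list nat) (w : fml M -> R) : fml M -> R :=
  fun p => w (fAnd p (vars_eq y)).
Definition pi_y {L} {M : structure L} (x : list nat) (w : fml M -> R) : fml M -> R :=
  fun q => w (fAnd (vars_eq x) q).

Definition smooth_over {L} (M : structure L) (y : list nat) (A : M -> Prop)
  (nu : fml M -> R) : Prop :=
  forall nu', keisler M y fullset nu' -> meas_eq M y A nu' nu ->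
    meas_eq M y fullset nu' nu.

Definition geqEA {L} (M : structure L) (x y : list nat) (A : M -> Prop)
  (mu nu : fml M -> R) : Prop :=
  exists lam, keisler M (x ++ y) A lam /\ meas_eq M x A (pi_x y lam) mu /\
   forall w, keisler M (x ++ y) fullset w ->
     meas_eq M (x ++ y) A w lam -> meas_eq M x fullset (pi_x y w) mu ->
     meas_eq M y fullset (pi_y x w) nu.

(* By smoothness, every global extension of a measure lambda in M_xy(A)
   whose y-marginal is nu|A has y-marginal nu, so it suffices to couple mu|A
   and nu|A.  A coupling is a point of the compact cube [0,1]^formulas cut
   out by linear equations (the measure axioms and the two marginal
   conditions).  Finitely many of them are satisfied by a product of two
   finitely supported measures: on finitely many formulas a Keisler measure
   agrees with a convex combination of realized types, one for each
   consistent atom of the Boolean algebra they generate. *)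

From Stdlib Require Import Reals List Lra Classical ClassicalEpsilon FunctionalExtensionality.
Import ListNotations.
Open Scope R_scope.

Definition lin {X : Type} (f : X -> R) (cs : list (R * X)) : R :=
  fold_right (fun c acc => fst c * f (snd c) + acc) 0 cs.

Definition solves {X : Type} (f : X -> R) (e : list (R * X) * R) : Prop :=
  lin f (fst e) = snd e.

Definition unit_valued {X : Type} (f : X -> R) : Prop := forall a, 0 <= f a <= 1.

Module BoxCompactness.
From HB Require Import structures.
From mathcomp Require Import all_boot all_order all_algebra.
From mathcomp Require Import all_classical all_reals all_analysis.
From mathcomp Require Import Rstruct Rstruct_topology finmap.
Import numFieldNormedType.Exports ArrowAsProduct.
Local Open Scope classical_set_scope.

Lemma mem_In (T : eqType) (a : T) (s : seq T) : reflect (List.In a s) (a \in s).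
Proof.
elim: s => [|b s IH]; first exact: ReflectF.
rewrite inE; apply: (iffP orP) => [[/eqP ->|/IH]|[->|/IH]]; by [left|right|rewrite eqxx].
Qed.

Lemma lin_continuous (X : Type) (cs : list (R * X)) :
  continuous (fun f : {classic X} -> R => lin f cs).
Proof.
elim: cs => [|[a x] cs IH] /=; first exact: cst_continuous.
move=> f; apply: (@continuousD _ R^o ({classic X} -> R)
  (fun f : {classic X} -> R => Rmult a (f x)) (fun f => lin f cs)); last exact: IH.
apply: (@continuousM _ ({classic X} -> R) (fun _ => a) (fun f : {classic X} -> R => f x)).
  exact: cst_continuous.
exact: (@proj_continuous {classic X} (fun _ => R) x).
Qed.

Lemma solves_closed (X : Type) (e : list (R * X) * R) :
  closed [set f : {classic X} -> R | solves f e].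
Proof.
apply: (preimage_closed (f := fun f : {classic X} -> R => lin f e.1) (D := [set e.2])).
  by move=> f _; apply: lin_continuous.
exact: closed_eq.
Qed.

Theorem linear_equations_compactness (X I : Type) (D : I -> Prop)
    (eqn : I -> list (R * X) * R) :
  (forall l, (forall i, List.In i l -> D i) ->
     exists f : X -> R, unit_valued f /\ forall i, List.In i l -> solves f (eqn i)) ->
  exists f : X -> R, unit_valued f /\ forall i, D i -> solves f (eqn i).
Proof.
move=> finite_solvable.
have [[i0 Di0]|noD] := pselect (exists i, D i); last first.
  exists (fun _ => R0); split=> [_|i Di]; last by case: noD; exists i.
  by split; [exact: Rle_refl | exact: Rle_0_1].
pose Box := [set f : {classic X} -> R | forall a, `[(0:R), (1:R)]%classic (f a)].
have Box_compact : compact Box.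
  exact: (@tychonoff {classic X} (fun _ => R) (fun _ => `[(0:R), (1:R)]%classic)
    (fun _ => @segment_compact R 0 1)).
pose F (i : {classic I}) := Box `&` [set f | solves f (eqn i)].
have finIF : finI (D : set {classic I}) F.
  move=> D' sD'.
  have [|f [f01 fD']] := finite_solvable (enum_fset D').
    by move=> i /(@mem_In {classic I} i (enum_fset D')) /sD'; rewrite in_setE.
  exists f => i iD'; split; last exact/fD'/(@mem_In {classic I} i (enum_fset D')).
  by move=> a /=; rewrite in_itv /=; have [/RleP -> /RleP ->] := f01 a.
have [|f [Boxf clf]] := Box_compact _ (finI_filter finIF).
  by exists (F i0) => [|g []]; first exact: finI_from1.
exists f; split=> [a|i Di].
  by have := Boxf a; rewrite /= in_itv /= => /andP [/RleP ? /RleP ?].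
have := solves_closed _ (eqn i); apply=> B nB.
have Fi : filter_from (finI_from (D : set {classic I}) F) id (F i).
  by exists (F i) => //; exact: finI_from1.
by have [g [[_ ?] ?]] := clf _ _ Fi nB; exists g.
Qed.

End BoxCompactness.

Section Semantics.
Context {L : signature} (M : structure L).

Lemma eval_coincidence (t : term L M) (s s' : nat -> M) :
  (forall i, tfree i t -> s i = s' i) -> eval M s t = eval M s' t.
Proof.
  induction t as [i|a|f args IH]; simpl; intros Hagree.
  - apply Hagree. reflexivity.
  - reflexivity.
  - f_equal. apply functional_extensionality. intros k.
    apply IH. intros i Hi. apply Hagree. exists k. exact Hi.
Qed.

Lemma sat_coincidence (p : fml M) : forall s s' : nat -> M,
  (forall i, ffree i p -> s i = s' i) -> (sat M s p <-> sat M s' p).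
Proof.
  induction p as [t1 t2|r args|q IH|q1 IH1 q2 IH2|j q IH]; simpl; intros s s' Hagree.
  - rewrite (eval_coincidence t1 s s'), (eval_coincidence t2 s s'); [tauto| |];
      intros i Hi; apply Hagree; auto.
  - replace (fun k => eval M s (args k)) with (fun k => eval M s' (args k)); [tauto|].
    apply functional_extensionality. intros k. symmetry. apply eval_coincidence.
    intros i Hi. apply Hagree. exists k. exact Hi.
  - rewrite (IH s s' Hagree). tauto.
  - rewrite (IH1 s s'), (IH2 s s'); [tauto| |]; intros i Hi; apply Hagree; auto.
  - assert (Hupd : forall a i, ffree i q -> upd s j a i = upd s' j a i).
    { intros a i Hi. unfold upd. destruct (Nat.eqb_spec i j); [reflexivity|].
      apply Hagree. split; [congruence|exact Hi]. }
    split; intros [a Ha]; exists a; apply (IH _ _ (Hupd a)); exact Ha.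
Qed.

Lemma sat_fOr (s : nat -> M) (p q : fml M) :
  sat M s (fOr p q) <-> sat M s p \/ sat M s q.
Proof. unfold fOr; simpl. tauto. Qed.

Lemma sat_fTop (s : nat -> M) : sat M s fTop.
Proof. simpl. exists (s 0%nat). reflexivity. Qed.

Lemma sat_vars_eq (s : nat -> M) (z : list nat) : sat M s (vars_eq z).
Proof. induction z as [|j z IH]; [apply sat_fTop|split; [reflexivity|exact IH]]. Qed.

End Semantics.

Lemma tparams_in_weaken {L P} (C C' : P -> Prop) (t : term L P) :
  (forall a, C a -> C' a) -> tparams_in C t -> tparams_in C' t.
Proof. induction t; simpl; auto. Qed.

Lemma fparams_in_weaken {L P} (C C' : P -> Prop) (p : formula L P) :
  (forall a, C a -> C' a) -> fparams_in C p -> fparams_in C' p.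
Proof.
  induction p; simpl; intros HC Hp; try tauto.
  - split; eapply tparams_in_weaken; eauto; tauto.
  - intros k. eapply tparams_in_weaken; eauto.
Qed.

Section Formulas.
Context {L : signature} (M : structure L).

Lemma in_L_weaken (z z' : list nat) (C C' : M -> Prop) (p : fml M) :
  incl z z' -> (forall a, C a -> C' a) -> in_L M z C p -> in_L M z' C' p.
Proof.
  intros Hz HC [Hfree Hpar]. split; [auto|]. eapply fparams_in_weaken; eauto.
Qed.

Variables (z : list nat) (C : M -> Prop).

Lemma in_L_and (p q : fml M) : in_L M z C p -> in_L M z C q -> in_L M z C (fAnd p q).
Proof. intros [H1 H2] [H3 H4]; split; simpl; [intros i [Hi|Hi]; auto|tauto]. Qed.

Lemma in_L_neg (p : fml M) : in_L M z C p -> in_L M z C (fNeg p).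
Proof. intros [H1 H2]; split; simpl; auto. Qed.

Lemma in_L_or (p q : fml M) : in_L M z C p -> in_L M z C q -> in_L M z C (fOr p q).
Proof. intros. unfold fOr. auto using in_L_and, in_L_neg. Qed.

Lemma in_L_top : in_L M z C fTop.
Proof. split; simpl; [intros i [H1 [H2|H2]]; congruence|tauto]. Qed.

Lemma in_L_vars_eq : in_L M z C (vars_eq z).
Proof.
  assert (Hgen : forall z', incl z' z -> in_L M z C (vars_eq z')).
  { induction z' as [|j z' IH]; intros Hincl; simpl; [apply in_L_top|].
    apply in_L_and; [|apply IH; eapply incl_cons_inv, Hincl].
    split; simpl; [|tauto]. intros i [Hi|Hi]; subst; apply Hincl; left; reflexivity. }
  apply Hgen, incl_refl.
Qed.

End Formulas.

Lemma in_L_pad_left {L} (M : structure L) x y C (b : fml M) :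
  in_L M y C b -> in_L M (x ++ y) C (fAnd (vars_eq x) b).
Proof.
  intros Hb. apply in_L_and.
  - apply (in_L_weaken M x (x ++ y) C C); [apply incl_appl, incl_refl|auto|apply in_L_vars_eq].
  - apply (in_L_weaken M y (x ++ y) C C); [apply incl_appr, incl_refl|auto|exact Hb].
Qed.

Section KeislerMeasures.
Context {L : signature} (M : structure L).

Lemma keisler_restrict z (C C' : M -> Prop) m :
  (forall a, C' a -> C a) -> keisler M z C m -> keisler M z C' m.
Proof.
  intros HC [Keq [Kpos [Kone Kadd]]].
  assert (Hin : forall p, in_L M z C' p -> in_L M z C p).
  { intros p. apply in_L_weaken; [apply incl_refl|exact HC]. }
  split; [|split; [|split]]; auto.
Qed.

Lemma keisler_unsat z C m (p : fml M) :
  keisler M z C m -> in_L M z C p -> (forall s, ~ sat M s p) -> m p = 0.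
Proof.
  intros [Keq [Kpos [Kone Kadd]]] Hp Hunsat.
  assert (Hsum : m (fOr fTop p) = m fTop + m p).
  { apply Kadd; auto using in_L_top. intros s [_ H]. exact (Hunsat s H). }
  rewrite (Kone (fOr fTop p)), (Kone fTop) in Hsum; auto using in_L_top, in_L_or.
  - lra.
  - apply sat_fTop.
  - intros s. apply sat_fOr. left. apply sat_fTop.
Qed.

Lemma keisler_pi_y x y C w :
  keisler M (x ++ y) C w -> keisler M y C (pi_y x w).
Proof.
  intros [Keq [Kpos [Kone Kadd]]]. unfold pi_y.
  split; [|split; [|split]].
  - intros p q Hp Hq Hpq. apply Keq; auto using in_L_pad_left.
    intros s. simpl. rewrite (Hpq s). tauto.
  - intros p Hp. auto using in_L_pad_left.
  - intros p Hp Hvalid. apply Kone; auto using in_L_pad_left.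
    intros s. split; [apply sat_vars_eq|auto].
  - intros p q Hp Hq Hdisj. rewrite <- Kadd; auto using in_L_pad_left.
    + apply Keq; auto using in_L_pad_left, in_L_or.
      intros s. unfold fOr. simpl. tauto.
    + intros s. simpl. specialize (Hdisj s). tauto.
Qed.

End KeislerMeasures.

Definition rsum {A : Type} (F : A -> R) (l : list A) : R :=
  fold_right (fun a acc => F a + acc) 0 l.

Lemma rsum_ext {A} (F G : A -> R) l :
  (forall a, In a l -> F a = G a) -> rsum F l = rsum G l.
Proof. induction l; simpl; intros H; auto. rewrite H, IHl; auto. Qed.

Lemma rsum_app {A} (F : A -> R) l1 l2 : rsum F (l1 ++ l2) = rsum F l1 + rsum F l2.
Proof. induction l1; simpl; [lra|rewrite IHl1; lra]. Qed.

Lemma rsum_flat_map {A B} (F : B -> R) (g : A -> list B) l :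
  rsum F (flat_map g l) = rsum (fun a => rsum F (g a)) l.
Proof. induction l; simpl; auto. rewrite rsum_app, IHl. reflexivity. Qed.

Lemma rsum_map {A B} (F : B -> R) (g : A -> B) l :
  rsum F (map g l) = rsum (fun a => F (g a)) l.
Proof. induction l; simpl; auto. rewrite IHl. reflexivity. Qed.

Lemma rsum_scale_l {A} (F : A -> R) c l : rsum (fun a => c * F a) l = c * rsum F l.
Proof. induction l; simpl; [lra|rewrite IHl; lra]. Qed.

Lemma rsum_scale_r {A} (F : A -> R) c l : rsum (fun a => F a * c) l = rsum F l * c.
Proof. induction l; simpl; [lra|rewrite IHl; lra]. Qed.

Lemma rsum_plus {A} (F G : A -> R) l : rsum (fun a => F a + G a) l = rsum F l + rsum G l.
Proof. induction l; simpl; [lra|rewrite IHl; lra]. Qed.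

Lemma rsum_le {A} (F G : A -> R) l :
  (forall a, In a l -> F a <= G a) -> rsum F l <= rsum G l.
Proof.
  induction l as [|a l IH]; simpl; intros H; [lra|].
  specialize (IH (fun b Hb => H b (or_intror Hb))). specialize (H a (or_introl eq_refl)). lra.
Qed.

Lemma rsum_nonneg {A} (F : A -> R) l : (forall a, In a l -> 0 <= F a) -> 0 <= rsum F l.
Proof.
  induction l as [|a l IH]; simpl; intros H; [lra|].
  specialize (IH (fun b Hb => H b (or_intror Hb))). specialize (H a (or_introl eq_refl)). lra.
Qed.

Section DiscreteMeasures.
Context {L : signature} (M : structure L).

Definition indicator (s : nat -> M) (p : fml M) : R :=
  if excluded_middle_informative (sat M s p) then 1 else 0.

Lemma indicator_iff s s' (p q : fml M) :
  (sat M s p <-> sat M s' q) -> indicator s p = indicator s' q.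
Proof.
  unfold indicator; intros H.
  destruct (excluded_middle_informative (sat M s p));
  destruct (excluded_middle_informative (sat M s' q)); tauto.
Qed.

Lemma indicator_bounds s (p : fml M) : 0 <= indicator s p <= 1.
Proof. unfold indicator. destruct (excluded_middle_informative _); lra. Qed.

Lemma indicator_true s (p : fml M) : sat M s p -> indicator s p = 1.
Proof. unfold indicator. destruct (excluded_middle_informative _); tauto. Qed.

Lemma indicator_false s (p : fml M) : ~ sat M s p -> indicator s p = 0.
Proof. unfold indicator. destruct (excluded_middle_informative _); tauto. Qed.

Lemma indicator_or s (p q : fml M) :
  ~ (sat M s p /\ sat M s q) -> indicator s (fOr p q) = indicator s p + indicator s q.
Proof.
  intros Hdisj. destruct (classic (sat M s p)) as [Hp|Hp].
  - rewrite (indicator_true _ p), (indicator_false _ q), indicator_true; auto.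
    + lra.
    + apply sat_fOr; auto.
  - rewrite (indicator_false _ p); auto. rewrite Rplus_0_l.
    apply indicator_iff. rewrite sat_fOr. tauto.
Qed.

Definition is_dist (dl : list (R * (nat -> M))) : Prop :=
  (forall ws, In ws dl -> 0 <= fst ws) /\ rsum fst dl = 1.

Definition dmeasure (dl : list (R * (nat -> M))) (p : fml M) : R :=
  rsum (fun ws => fst ws * indicator (snd ws) p) dl.

Lemma dmeasure_bounds dl p : is_dist dl -> 0 <= dmeasure dl p <= 1.
Proof.
  intros [Hnonneg Htotal]. split.
  - apply rsum_nonneg. intros ws Hws.
    pose proof (Hnonneg ws Hws). pose proof (indicator_bounds (snd ws) p). nra.
  - rewrite <- Htotal. apply rsum_le. intros ws Hws.
    pose proof (Hnonneg ws Hws). pose proof (indicator_bounds (snd ws) p). nra.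
Qed.

Lemma dmeasure_keisler z C dl : is_dist dl -> keisler M z C (dmeasure dl).
Proof.
  intros Hdl. split; [|split; [|split]].
  - intros p q _ _ Hpq. apply rsum_ext. intros ws _.
    rewrite (indicator_iff (snd ws) (snd ws) p q); auto.
  - intros p _. apply dmeasure_bounds, Hdl.
  - intros p _ Hvalid. destruct Hdl as [_ Htotal]. rewrite <- Htotal.
    apply rsum_ext. intros ws _. rewrite indicator_true; auto. lra.
  - intros p q _ _ Hdisj. unfold dmeasure. rewrite <- rsum_plus. apply rsum_ext.
    intros ws _. rewrite indicator_or; auto. lra.
Qed.

End DiscreteMeasures.

Section Discretization.
Context {L : signature} (M : structure L) (z : list nat) (C : M -> Prop) (m : fml M -> R).
Hypothesis Hm : keisler M z C m.

Definition decides (g a : fml M) : Prop :=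
  (forall s, sat M s g -> sat M s a) \/ (forall s, sat M s g -> ~ sat M s a).

Lemma keisler_atoms (l : list (fml M)) :
  (forall a, In a l -> in_L M z C a) ->
  exists P, (forall g, In g P -> in_L M z C g) /\
    (forall d, in_L M z C d -> m d = rsum (fun g => m (fAnd d g)) P) /\
    (forall a g, In a l -> In g P -> decides g a).
Proof.
  pose proof Hm as [Keq [_ [_ Kadd]]].
  induction l as [|a l IH]; intros Hl.
  - exists [fTop]. split; [|split].
    + intros g [<-|[]]. apply in_L_top.
    + intros d Hd. simpl. rewrite Rplus_0_r. apply Keq; auto using in_L_and, in_L_top.
      intros s. simpl. pose proof (sat_fTop M s). tauto.
    + intros a g [].
  - destruct IH as [P [HP [Hsplit Hdec]]]; [intros; apply Hl; simpl; auto|].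
    assert (Ha : in_L M z C a) by (apply Hl; simpl; auto).
    exists (flat_map (fun g => [fAnd g a; fAnd g (fNeg a)]) P). split; [|split].
    + intros g' Hg'. apply in_flat_map in Hg'. destruct Hg' as [g [Hg Hg']].
      simpl in Hg'. destruct Hg' as [<-|[<-|[]]]; auto using in_L_and, in_L_neg.
    + intros d Hd. rewrite rsum_flat_map, Hsplit; auto. apply rsum_ext. intros g Hg.
      simpl. rewrite Rplus_0_r, <- Kadd; auto using in_L_and, in_L_neg.
      * apply Keq; auto using in_L_and, in_L_neg, in_L_or.
        intros s. rewrite sat_fOr. simpl. tauto.
      * intros s. simpl. tauto.
    + intros a' g' Ha' Hg'. apply in_flat_map in Hg'. destruct Hg' as [g [Hg Hg']].
      simpl in Ha', Hg'. destruct Ha' as [<-|Ha'].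
      * destruct Hg' as [<-|[<-|[]]]; [left|right]; intros s; simpl; tauto.
      * destruct (Hdec a' g Ha' Hg) as [H|H];
        destruct Hg' as [<-|[<-|[]]]; [left|left|right|right]; intros s; simpl;
        intros Hs; apply H; tauto.
Qed.

(* Each satisfiable atom g carries its mass m g to one assignment realizing it. *)
Lemma dmeasure_on_atoms (P : list (fml M)) :
  (forall g, In g P -> in_L M z C g) ->
  exists dl : list (R * (nat -> M)), (forall ws, In ws dl -> 0 <= fst ws) /\
    rsum fst dl = rsum m P /\
    forall a, in_L M z C a -> (forall g, In g P -> decides g a) ->
      dmeasure M dl a = rsum (fun g => m (fAnd a g)) P.
Proof.
  pose proof Hm as [Keq [Kpos _]].
  induction P as [|g P IH]; intros HP.
  - exists []. split; [intros ws []|split; [reflexivity|]]. reflexivity.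
  - destruct IH as [dl [Hnonneg [Htotal Hdl]]]; [intros; apply HP; simpl; auto|].
    assert (Hg : in_L M z C g) by (apply HP; simpl; auto).
    assert (Hdec_tail : forall a, (forall g', In g' (g :: P) -> decides g' a) ->
      forall g', In g' P -> decides g' a).
    { intros a Hdec g' Hg'. apply Hdec. right. exact Hg'. }
    destruct (classic (exists s, sat M s g)) as [[s Hs]|Hunsat].
    + exists ((m g, s) :: dl). split; [|split].
      * intros ws [<-|Hws]; [apply Kpos, Hg|auto].
      * simpl. rewrite Htotal. reflexivity.
      * intros a Ha Hdec. unfold dmeasure in *. simpl.
        rewrite Hdl; [f_equal|exact Ha|exact (Hdec_tail a Hdec)].
        destruct (Hdec g (or_introl eq_refl)) as [Hga|Hga].
        -- rewrite indicator_true, Rmult_1_r; auto. apply Keq; auto using in_L_and.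
           intros s'. simpl. pose proof (Hga s'). tauto.
        -- rewrite indicator_false, Rmult_0_r; auto. symmetry.
           apply (keisler_unsat M z C); auto using in_L_and.
           intros s' [H1 H2]. exact (Hga s' H2 H1).
    + exists dl. split; [auto|split].
      * simpl. rewrite (keisler_unsat M z C m g), Htotal; auto. ring.
        intros s Hs. apply Hunsat. exists s. exact Hs.
      * intros a Ha Hdec. simpl. rewrite Hdl; [|exact Ha|exact (Hdec_tail a Hdec)].
        rewrite (keisler_unsat M z C m (fAnd a g)); auto using in_L_and. ring.
        intros s [_ Hs]. apply Hunsat. exists s. exact Hs.
Qed.

Lemma keisler_discretize (l : list (fml M)) :
  (forall a, In a l -> in_L M z C a) ->
  exists dl, is_dist M dl /\ forall a, In a l -> dmeasure M dl a = m a.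
Proof.
  intros Hl. pose proof Hm as [Keq [_ [Kone _]]].
  destruct (keisler_atoms l Hl) as [P [HP [Hsplit Hdec]]].
  destruct (dmeasure_on_atoms P HP) as [dl [Hnonneg [Htotal Hdl]]].
  exists dl. split; [split; [exact Hnonneg|]|].
  - rewrite Htotal, <- (Kone fTop), (Hsplit fTop); auto using in_L_top.
    + apply rsum_ext. intros g Hg. apply Keq; auto using in_L_and, in_L_top.
      intros s. simpl. pose proof (sat_fTop M s). tauto.
    + apply sat_fTop.
  - intros a Ha. rewrite Hdl, <- Hsplit; auto.
Qed.

End Discretization.

Section Products.
Context {L : signature} (M : structure L) (x : list nat).

Definition glue (s t : nat -> M) : nat -> M :=
  fun i => if in_dec Nat.eq_dec i x then s i else t i.

Definition dprod (dl1 dl2 : list (R * (nat -> M))) : list (R * (nat -> M)) :=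
  flat_map (fun ws => map (fun vt => (fst ws * fst vt, glue (snd ws) (snd vt))) dl2) dl1.

Lemma dprod_is_dist dl1 dl2 : is_dist M dl1 -> is_dist M dl2 -> is_dist M (dprod dl1 dl2).
Proof.
  intros [Hnonneg1 Htotal1] [Hnonneg2 Htotal2]. split.
  - intros ws Hws. apply in_flat_map in Hws. destruct Hws as [a [Ha Hws]].
    apply in_map_iff in Hws. destruct Hws as [b [<- Hb]].
    simpl. pose proof (Hnonneg1 a Ha). pose proof (Hnonneg2 b Hb). nra.
  - unfold dprod. rewrite rsum_flat_map, <- Htotal1. apply rsum_ext. intros ws _.
    rewrite rsum_map. simpl. rewrite rsum_scale_l, Htotal2. ring.
Qed.

Lemma dmeasure_dprod dl1 dl2 p :
  dmeasure M (dprod dl1 dl2) p =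
  rsum (fun ws => fst ws *
    rsum (fun vt => fst vt * indicator M (glue (snd ws) (snd vt)) p) dl2) dl1.
Proof.
  unfold dmeasure, dprod. rewrite rsum_flat_map. apply rsum_ext. intros ws _.
  rewrite rsum_map, <- rsum_scale_l. apply rsum_ext. intros vt _. simpl. ring.
Qed.

Lemma dmeasure_dprod_left y dl1 dl2 (a : fml M) :
  is_dist M dl2 -> (forall i, ffree i a -> In i x) ->
  dmeasure M (dprod dl1 dl2) (fAnd a (vars_eq y)) = dmeasure M dl1 a.
Proof.
  intros [_ Htotal2] Ha. rewrite dmeasure_dprod. apply rsum_ext. intros ws _. f_equal.
  transitivity (rsum (fun vt => fst vt * indicator M (snd ws) a) dl2).
  2: { rewrite rsum_scale_r, Htotal2. ring. }
  apply rsum_ext. intros vt _. f_equal. apply indicator_iff.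
  simpl. rewrite (sat_coincidence M a (glue (snd ws) (snd vt)) (snd ws)).
  - pose proof (sat_vars_eq M (glue (snd ws) (snd vt)) y). tauto.
  - intros i Hi. unfold glue. destruct (in_dec Nat.eq_dec i x); [reflexivity|].
    exfalso. auto.
Qed.

Lemma dmeasure_dprod_right y dl1 dl2 (b : fml M) :
  is_dist M dl1 -> (forall i, In i x -> ~ In i y) -> (forall i, ffree i b -> In i y) ->
  dmeasure M (dprod dl1 dl2) (fAnd (vars_eq x) b) = dmeasure M dl2 b.
Proof.
  intros [_ Htotal1] Hxy Hb. rewrite dmeasure_dprod.
  transitivity (rsum (fun ws => fst ws * dmeasure M dl2 b) dl1).
  2: { rewrite rsum_scale_r, Htotal1. ring. }
  apply rsum_ext. intros ws _. f_equal.
  apply rsum_ext. intros vt _. f_equal. apply indicator_iff.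
  simpl. rewrite (sat_coincidence M b (glue (snd ws) (snd vt)) (snd vt)).
  - pose proof (sat_vars_eq M (glue (snd ws) (snd vt)) x). tauto.
  - intros i Hi. unfold glue. destruct (in_dec Nat.eq_dec i x); [|reflexivity].
    exfalso. eapply Hxy; eauto.
Qed.

End Products.

Section Coupling.
Context {L : signature} (M : structure L) (x y : list nat) (C : M -> Prop)
  (mu nu : fml M -> R).
Hypothesis Hxy : forall i, In i x -> ~ In i y.
Hypothesis Hmu : keisler M x C mu.
Hypothesis Hnu : keisler M y C nu.

Inductive constraint : Type :=
| CEquiv (p q : fml M)
| CTotal (p : fml M)
| CAdditive (p q : fml M)
| CMarginalX (a : fml M)
| CMarginalY (b : fml M).

Definition admissible (k : constraint) : Prop :=
  match k with
  | CEquiv p q => in_L M (x ++ y) C p /\ in_L M (x ++ y) C q /\ equivM M p q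
  | CTotal p => in_L M (x ++ y) C p /\ forall s, sat M s p
  | CAdditive p q => in_L M (x ++ y) C p /\ in_L M (x ++ y) C q /\
      forall s, ~ (sat M s p /\ sat M s q)
  | CMarginalX a => in_L M x C a
  | CMarginalY b => in_L M y C b
  end.

Definition equation (k : constraint) : list (R * fml M) * R :=
  match k with
  | CEquiv p q => ([(1, p); (-1, q)], 0)
  | CTotal p => ([(1, p)], 1)
  | CAdditive p q => ([(1, fOr p q); (-1, p); (-1, q)], 0)
  | CMarginalX a => ([(1, fAnd a (vars_eq y))], mu a)
  | CMarginalY b => ([(1, fAnd (vars_eq x) b)], nu b)
  end.

Definition marginals_x (k : constraint) : list (fml M) :=
  match k with CMarginalX a => [a] | _ => [] end.

Definition marginals_y (k : constraint) : list (fml M) :=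
  match k with CMarginalY b => [b] | _ => [] end.

Lemma coupling_of_solution (lam : fml M -> R) :
  unit_valued lam -> (forall k, admissible k -> solves lam (equation k)) ->
  keisler M (x ++ y) C lam /\ meas_eq M x C (pi_x y lam) mu /\
  meas_eq M y C (pi_y x lam) nu.
Proof.
  unfold solves, lin. intros H01 Hsol.
  split; [split; [|split; [|split]]|split].
  - intros p q Hp Hq Hpq. specialize (Hsol (CEquiv p q)). simpl in Hsol.
    assert (H : 1 * lam p + (-1 * lam q + 0) = 0) by auto. lra.
  - intros p _. apply H01.
  - intros p Hp Hvalid. specialize (Hsol (CTotal p)). simpl in Hsol.
    assert (H : 1 * lam p + 0 = 1) by auto. lra.
  - intros p q Hp Hq Hdisj. specialize (Hsol (CAdditive p q)). simpl in Hsol.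
    assert (H : 1 * lam (fOr p q) + (-1 * lam p + (-1 * lam q + 0)) = 0) by auto. lra.
  - intros a Ha. specialize (Hsol (CMarginalX a) Ha). simpl in Hsol.
    unfold pi_x. lra.
  - intros b Hb. specialize (Hsol (CMarginalY b) Hb). simpl in Hsol.
    unfold pi_y. lra.
Qed.

Lemma solves_of_coupling (lam : fml M -> R) (k : constraint) :
  keisler M (x ++ y) C lam -> admissible k ->
  (forall a, In a (marginals_x k) -> pi_x y lam a = mu a) ->
  (forall b, In b (marginals_y k) -> pi_y x lam b = nu b) ->
  solves lam (equation k).
Proof.
  intros [Keq [_ [Kone Kadd]]] Hk Hx Hy. unfold solves, lin.
  destruct k as [p q|p|p q|a|b]; simpl in Hk |- *.
  - destruct Hk as [Hp [Hq Hpq]]. rewrite (Keq p q); auto. ring.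
  - destruct Hk as [Hp Hvalid]. rewrite Kone; auto. ring.
  - destruct Hk as [Hp [Hq Hdisj]]. rewrite Kadd; auto. ring.
  - specialize (Hx a (or_introl eq_refl)). unfold pi_x in Hx. lra.
  - specialize (Hy b (or_introl eq_refl)). unfold pi_y in Hy. lra.
Qed.

Lemma finite_constraints_solvable (l : list constraint) :
  (forall k, In k l -> admissible k) ->
  exists lam : fml M -> R, unit_valued lam /\
    forall k, In k l -> solves lam (equation k).
Proof.
  intros Hl.
  assert (Hla : forall a, In a (flat_map marginals_x l) -> in_L M x C a).
  { intros a Ha. apply in_flat_map in Ha. destruct Ha as [k [Hk Ha]].
    specialize (Hl k Hk). destruct k; simpl in Ha; try contradiction.
    destruct Ha as [<-|[]]. exact Hl. }
  assert (Hlb : forall b, In b (flat_map marginals_y l) -> in_L M y C b).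
  { intros b Hb. apply in_flat_map in Hb. destruct Hb as [k [Hk Hb]].
    specialize (Hl k Hk). destruct k; simpl in Hb; try contradiction.
    destruct Hb as [<-|[]]. exact Hl. }
  destruct (keisler_discretize M x C mu Hmu _ Hla) as [dl1 [Hdl1 Hmu1]].
  destruct (keisler_discretize M y C nu Hnu _ Hlb) as [dl2 [Hdl2 Hnu2]].
  pose proof (dprod_is_dist M x dl1 dl2 Hdl1 Hdl2) as Hdl.
  exists (dmeasure M (dprod M x dl1 dl2)). split.
  - intros p. apply dmeasure_bounds, Hdl.
  - intros k Hk. apply solves_of_coupling; auto using dmeasure_keisler.
    + intros a Ha.
      assert (Ha' : In a (flat_map marginals_x l)) by (apply in_flat_map; eauto).
      unfold pi_x. rewrite dmeasure_dprod_left; [auto|exact Hdl2|apply (Hla a Ha')].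
    + intros b Hb.
      assert (Hb' : In b (flat_map marginals_y l)) by (apply in_flat_map; eauto).
      unfold pi_y.
      rewrite (dmeasure_dprod_right M x y); [auto|exact Hdl1|exact Hxy|apply (Hlb b Hb')].
Qed.

Theorem keisler_coupling :
  exists lam, keisler M (x ++ y) C lam /\ meas_eq M x C (pi_x y lam) mu /\
    meas_eq M y C (pi_y x lam) nu.
Proof.
  destruct (BoxCompactness.linear_equations_compactness (fml M) constraint
    admissible equation finite_constraints_solvable) as [lam [H01 Hsol]].
  exists lam. exact (coupling_of_solution lam H01 Hsol).
Qed.

End Coupling.

Theorem proposition4p6 (L : signature) (M : structure L) (K : Type)
  (HM : monster M K) (A : M -> Prop) (HA : small M K A)
  (x y : list nat) (Hxy : forall i, In i x -> ~ In i y)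
  (nu : fml M -> R) (Hnu : keisler M y fullset nu) (Hsm : smooth_over M y A nu)
  (mu : fml M -> R) (Hmu : keisler M x fullset mu) :
  geqEA M x y A mu nu.
Proof.
  assert (Hfull : forall a : M, A a -> fullset a) by (intros; exact I).
  destruct (keisler_coupling M x y A mu nu Hxy (keisler_restrict M x _ _ mu Hfull Hmu)
    (keisler_restrict M y _ _ nu Hfull Hnu)) as [lam [Hlam [Hlam_x Hlam_y]]].
  exists lam. split; [exact Hlam|split; [exact Hlam_x|]].
  intros w Hw Hw_lam _. apply Hsm.
  - exact (keisler_pi_y M x y fullset w Hw).
  - intros b Hb. unfold pi_y. rewrite Hw_lam by (apply in_L_pad_left; exact Hb).
    exact (Hlam_y b Hb).
Qed.
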